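(* Let $d\in \mathbb{N}$. Then the following are equivalent: (i) Every bilipschitz mapping $f\colon \mathbb{Z}^{d}\to \mathbb{R}^{d}$ admits a bilipschitz mapping $F\colon \mathbb{R}^{d}\to\mathbb{R}^{d}$ with $F|_{\mathbb{Z}^{d}}=f$. (ii) For every separated net $A$ of $\mathbb{R}^{d}$ and every bilipschitz mapping $f\colon A\to \mathbb{R}^{d}$ there is a bilipschitz mapping $F\colon \mathbb{R}^{d}\to\mathbb{R}^{d}$ with $F|_{A}=f$. Furthermore, if (i) holds with $\operatorname{bilip}(F)\leq C_{d}(\operatorname{bilip}(f))$ for some monotone increasing function $C_{d}\colon [1,\infty)\to [1,\infty)$, then (ii) holds with \[\operatorname{bilip}(F)\leq K\cdot C_{d}\big(24\sqrt{d}R^{2}K^{3}\operatorname{bilip}(f)\big),\] where $K:= 16\max\{\frac{3d}{r},1\}$ and $A$ is an $r$-separated $R$-net (i.e. $R$ and $r$ are the net and separation constants of $A$).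
   Context: $\|\cdot\|$ is the Euclidean norm. A set $A\subseteq\mathbb{R}^d$ is $r$-separated if $\|a-a'\|\geq r$ for all distinct $a,a'\in A$; it is an $R$-net if for every $x\in\mathbb{R}^d$ there is $a\in A$ with $\|x-a\|\leq R$; a separated net is a set that is an $r$-separated $R$-net for some $r,R>0$. For a mapping $f$, $\operatorname{Lip}(f)=\sup_{x\neq y}\|f(y)-f(x)\|/\|y-x\|$; for injective $f$, $\operatorname{bilip}(f)=\max\{\operatorname{Lip}(f),\operatorname{Lip}(f^{-1})\}$. $f$ is $L$-bilipschitz if $\operatorname{bilip}(f)\le L$, and bilipschitz if it is $L$-bilipschitz for some finite $L$. *)

From HB Require Import structures.
From mathcomp Require Import all_boot all_order all_algebra.
From mathcomp Require Import all_classical all_reals.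
Set Implicit Arguments. Unset Strict Implicit. Unset Printing Implicit Defensive.
Import Order.TTheory GRing.Theory Num.Theory.
Local Open Scope ring_scope.
Local Open Scope classical_set_scope.

Section Defs.
Variables (R : realType) (d : nat).
Notation vec := 'rV[R]_d.

Definition enorm (x : vec) : R := Num.sqrt (\sum_(i < d) x ord0 i ^+ 2).

Definition Zd : set vec := [set x | forall i : 'I_d, x ord0 i \is a Num.int].

Definition separated (r : R) (A : set vec) : Prop :=
  forall a a', A a -> A a' -> a != a' -> r <= enorm (a - a').

Definition is_net (Rn : R) (A : set vec) : Prop :=
  forall x : vec, exists2 a, A a & enorm (x - a) <= Rn.

Definition separated_net (A : set vec) : Prop :=
  exists r Rn : R, [/\ 0 < r, 0 < Rn, separated r A & is_net Rn A].

(* A mapping A -> R^d is represented by a total function; only its values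
   on A matter. *)
Definition Lip_on (A : set vec) (f : vec -> vec) : R :=
  sup [set q | exists x y, [/\ A x, A y, x != y &
        q = enorm (f y - f x) / enorm (y - x)]].

(* Lip(f^{-1}) on f(A), written through the parametrisation by A
   (f injective on A). *)
Definition Lipinv_on (A : set vec) (f : vec -> vec) : R :=
  sup [set q | exists x y, [/\ A x, A y, x != y &
        q = enorm (y - x) / enorm (f y - f x)]].

Definition bilip_on (A : set vec) (f : vec -> vec) : R :=
  Num.max (Lip_on A f) (Lipinv_on A f).

Definition L_bilip_on (L : R) (A : set vec) (f : vec -> vec) : Prop :=
  {in A &, injective f} /\
  forall x y, A x -> A y ->
    enorm (f y - f x) <= L * enorm (y - x) /\
    enorm (y - x) <= L * enorm (f y - f x).

Definition bilip_map_on (A : set vec) (f : vec -> vec) : Prop :=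
  exists L : R, L_bilip_on L A f.

Definition extends (A : set vec) (F f : vec -> vec) : Prop :=
  forall a, A a -> F a = f a.

End Defs.

From HB Require Import structures.
From mathcomp Require Import all_boot all_order all_algebra.
From mathcomp Require Import all_classical all_reals.
From mathcomp Require Import ring lra.
Import Order.TTheory GRing.Theory Num.Theory.
Local Open Scope ring_scope.
Local Open Scope classical_set_scope.
Set Implicit Arguments. Unset Strict Implicit. Unset Printing Implicit Defensive.

(* A perturbation h of
   the identity by tent-shaped bumps of radius r/2 around the
   points of A (disjoint supports, displacement at most r/8, hence
   4/3-bilipschitz) moves each a in A onto a nearby point round a of the fine
   lattice s Z^d, s = r / (8 d).  The map f is then carried to all of s Z^d by
   x |-> f a + slope (x - round a), with a a point of A near x: the additive
   errors of this coarse map are absorbed multiplicatively because distinct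
   lattice points are s apart and distinct points of A are r apart, so after
   rescaling by s it is bilipschitz on Z^d.  If G extends this lattice map, then
   x |-> s G (h x / s) extends f, with constant 4/3 bilip G. *)

Section EuclideanNorm.
Variables (R : realType) (d : nat).
Implicit Types (x y z : 'rV[R]_d) (k m : R).

Lemma enorm_ge0 x : 0 <= enorm x.
Proof. exact: sqrtr_ge0. Qed.

Lemma coord_le_enorm x i : `|x ord0 i| <= enorm x.
Proof.
rewrite /enorm -sqrtr_sqr ler_sqrt ?sumr_ge0 // => [|j _]; last exact: sqr_ge0.
by rewrite (bigD1 i) //= lerDl sumr_ge0 // => j _; exact: sqr_ge0.
Qed.

Lemma enorm_eq0 x : enorm x = 0 -> x = 0.
Proof.
by move=> x0; apply/rowP => i; apply/eqP; rewrite mxE -normr_le0 -x0 coord_le_enorm.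
Qed.

Lemma enorm0 : enorm (0 : 'rV[R]_d) = 0.
Proof. by rewrite /enorm big1 ?sqrtr0 // => i _; rewrite mxE expr0n. Qed.

Lemma enormZ k x : enorm (k *: x) = `|k| * enorm x.
Proof.
rewrite /enorm -sqrtr_sqr -sqrtrM ?sqr_ge0 // mulr_sumr.
by congr Num.sqrt; apply: eq_bigr => i _; rewrite mxE exprMn.
Qed.

Lemma enormN x : enorm (- x) = enorm x.
Proof. by rewrite -scaleN1r enormZ normrN normr1 mul1r. Qed.

Lemma enorm_distC x y : enorm (x - y) = enorm (y - x).
Proof. by rewrite -enormN opprB. Qed.

Lemma enorm_sub_gt0 x y : x != y -> 0 < enorm (y - x).
Proof.
move=> xy; rewrite lt_def enorm_ge0 andbT; apply/eqP => /enorm_eq0/eqP.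
by rewrite subr_eq0 eq_sym (negbTE xy).
Qed.

Lemma cauchy_schwarz x y :
  \sum_(i < d) x ord0 i * y ord0 i <= enorm x * enorm y.
Proof.
set a := enorm x; set b := enorm y.
have sqr_enorm z : enorm z ^+ 2 = \sum_(i < d) z ord0 i ^+ 2.
  by rewrite sqr_sqrtr // sumr_ge0 // => i _; exact: sqr_ge0.
have [a0|a_neq0] := eqVneq a 0.
  by rewrite a0 mul0r big1 // => i _; rewrite (enorm_eq0 a0) mxE mul0r.
have [b0|b_neq0] := eqVneq b 0.
  by rewrite b0 mulr0 big1 // => i _; rewrite (enorm_eq0 b0) mxE mulr0.
have ab_gt0 : 0 < 2 * a * b.
  by rewrite !mulr_gt0 // lt_def ?a_neq0 ?b_neq0 enorm_ge0.
have : 0 <= \sum_(i < d) (b * x ord0 i - a * y ord0 i) ^+ 2.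
  by apply: sumr_ge0 => i _; exact: sqr_ge0.
have -> : \sum_(i < d) (b * x ord0 i - a * y ord0 i) ^+ 2 =
    b ^+ 2 * \sum_(i < d) x ord0 i ^+ 2 + a ^+ 2 * \sum_(i < d) y ord0 i ^+ 2
    - 2 * a * b * \sum_(i < d) x ord0 i * y ord0 i.
  rewrite !mulr_sumr -sumrN -!big_split /=.
  by apply: eq_bigr => i _; ring.
rewrite -!sqr_enorm -/a -/b subr_ge0.
have -> : b ^+ 2 * a ^+ 2 + a ^+ 2 * b ^+ 2 = 2 * a * b * (a * b) by ring.
by rewrite ler_pM2l.
Qed.

Lemma ler_enormD x y : enorm (x + y) <= enorm x + enorm y.
Proof.
rewrite {1}/enorm -(ger0_norm (addr_ge0 (enorm_ge0 x) (enorm_ge0 y))) -sqrtr_sqr.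
rewrite ler_sqrt ?sqr_ge0 //.
have sqr_enorm z : enorm z ^+ 2 = \sum_(i < d) z ord0 i ^+ 2.
  by rewrite sqr_sqrtr // sumr_ge0 // => i _; exact: sqr_ge0.
have -> : \sum_(i < d) (x + y) ord0 i ^+ 2 = enorm x ^+ 2 + enorm y ^+ 2 +
    2 * \sum_(i < d) x ord0 i * y ord0 i.
  rewrite !sqr_enorm mulr_sumr -!big_split /=.
  by apply: eq_bigr => i _; rewrite mxE; ring.
have := cauchy_schwarz x y; lra.
Qed.

Lemma ler_enormB x y : enorm (x - y) <= enorm x + enorm y.
Proof. by rewrite -(enormN y) ler_enormD. Qed.

Lemma ler_enorm_distD z x y : enorm (x - y) <= enorm (x - z) + enorm (z - y).
Proof. by have := ler_enormD (x - z) (z - y); rewrite addrA subrK. Qed.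

Lemma ler_enorm_dist x y : `|enorm x - enorm y| <= enorm (x - y).
Proof.
have := ler_enorm_distD y x 0; have := ler_enorm_distD x y 0.
rewrite !subr0 (enorm_distC y x) ler_norml => *; apply/andP; split; lra.
Qed.

Lemma enorm_le_coords x m :
  0 <= m -> (forall i, `|x ord0 i| <= m) -> enorm x <= d%:R * m.
Proof.
move=> m0 xm; rewrite /enorm -(ger0_norm (mulr_ge0 (ler0n _ d) m0)) -sqrtr_sqr.
rewrite ler_sqrt ?sqr_ge0 //; apply: (@le_trans _ _ (\sum_(i < d) m ^+ 2)).
  by apply: ler_sum => i _; rewrite -real_normK ?num_real // lerXn2r ?nnegrE.
rewrite sumr_const card_ord -[_ *+ d]mulr_natl exprMn; apply: ler_wpM2r; first exact: sqr_ge0.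
by rewrite -natrX ler_nat; case: (d) => // n; rewrite expnS leq_pmulr // expn_gt0.
Qed.

End EuclideanNorm.

Lemma sup_le_ub (R : realType) (E : set R) (B : R) :
  0 <= B -> ubound E B -> sup E <= B.
Proof.
move=> B0 EB; have [E_ne|E0] := pselect (E !=set0); first exact: ge_sup.
suff -> : E = set0 by rewrite sup0.
by apply/seteqP; split=> // q Eq; apply: E0; exists q.
Qed.

Section Bilipschitz.
Variables (R : realType) (d : nat).
Implicit Types (A : set 'rV[R]_d) (f g h G : 'rV[R]_d -> 'rV[R]_d) (L M : R).

Lemma L_bilip_on_bounds L A f :
  (forall x y, A x -> A y -> enorm (f y - f x) <= L * enorm (y - x) /\
     enorm (y - x) <= L * enorm (f y - f x)) -> L_bilip_on L A f.
Proof.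
move=> fL; split=> // x y; rewrite !in_setE => Ax Ay fxy.
have [_] := fL x y Ax Ay; rewrite fxy subrr enorm0 mulr0 => yx0.
have /enorm_eq0/eqP : enorm (y - x) = 0 by apply/eqP; rewrite eq_le yx0 enorm_ge0.
by rewrite subr_eq0 => /eqP.
Qed.

Lemma L_bilip_on_ge1 L A f x y :
  A x -> A y -> x != y -> L_bilip_on L A f -> 1 <= L.
Proof.
move=> Ax Ay xy [_ fL]; have [fxy yx] := fL x y Ax Ay.
have yx_gt0 := enorm_sub_gt0 xy; have := enorm_ge0 (f y - f x); nra.
Qed.

Lemma bilip_on_le L A f : 0 <= L -> L_bilip_on L A f -> bilip_on A f <= L.
Proof.
move=> L0 [finj fL]; rewrite /bilip_on ge_max.
apply/andP; split; apply: sup_le_ub => // _ [x [y [Ax Ay xy ->]]];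
  have [fxy yx] := fL x y Ax Ay.
  by rewrite ler_pdivrMr ?enorm_sub_gt0 // mulrC.
have fx_neq : f x != f y.
  by apply: contra xy => /eqP/finj; rewrite !in_setE => /(_ Ax Ay) ->.
by rewrite ler_pdivrMr ?enorm_sub_gt0 // mulrC.
Qed.

Lemma bilip_on_ge0 A f : 0 <= bilip_on A f.
Proof.
rewrite /bilip_on le_max /Lip_on; apply/orP; left; set S := [set q | _].
have [S_sup | S_nosup] := pselect (has_sup S); last by rewrite sup_out.
have [q Sq] := S_sup.1; apply: le_trans (sup_upper_bound S_sup Sq).
by case: Sq => x [y [_ _ _ ->]]; rewrite divr_ge0 ?enorm_ge0.
Qed.

(* The two points make the sets of ratios nonempty, so that their suprema
   bound every ratio. *)
Lemma L_bilip_on_bilip L A f x0 y0 :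
  A x0 -> A y0 -> x0 != y0 -> L_bilip_on L A f -> L_bilip_on (bilip_on A f) A f.
Proof.
move=> Ax0 Ay0 xy0 [finj fL].
have f_neq x y : A x -> A y -> x != y -> f x != f y.
  by move=> Ax Ay; apply: contra => /eqP/finj; rewrite !in_setE => /(_ Ax Ay) ->.
have ratio_le (g : 'rV[R]_d -> 'rV[R]_d -> R) :
    (forall x y, A x -> A y -> x != y -> g x y <= L) ->
    forall x y, A x -> A y -> x != y ->
    g x y <= sup [set q | exists x y, [/\ A x, A y, x != y & q = g x y]].
  move=> gL x y Ax Ay xy; apply: sup_upper_bound; last by exists x, y.
  split; first by exists (g x0 y0), x0, y0.
  by exists L => _ [u [v [Au Av uv ->]]]; exact: gL.
split=> // x y Ax Ay; have [->|xy] := eqVneq x y.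
  by rewrite !subrr enorm0 mulr0.
have yx_gt0 := enorm_sub_gt0 xy; have fyx_gt0 := enorm_sub_gt0 (f_neq _ _ Ax Ay xy).
have Lip_ge : enorm (f y - f x) / enorm (y - x) <= Lip_on A f.
  apply: (ratio_le (fun u v => enorm (f v - f u) / enorm (v - u))) => // u v Au Av uv.
  by have [fuv _] := fL u v Au Av; rewrite ler_pdivrMr ?enorm_sub_gt0 // mulrC.
have Lipinv_ge : enorm (y - x) / enorm (f y - f x) <= Lipinv_on A f.
  apply: (ratio_le (fun u v => enorm (v - u) / enorm (f v - f u))) => // u v Au Av uv.
  by have [_ vu] := fL u v Au Av; rewrite ler_pdivrMr ?enorm_sub_gt0 ?f_neq // mulrC.
have : enorm (f y - f x) / enorm (y - x) <= bilip_on A f by rewrite le_max Lip_ge.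
have : enorm (y - x) / enorm (f y - f x) <= bilip_on A f by rewrite le_max Lipinv_ge orbT.
by rewrite !ler_pdivrMr.
Qed.

Lemma bilip_on_ge1 L A f x y :
  A x -> A y -> x != y -> L_bilip_on L A f -> 1 <= bilip_on A f.
Proof.
by move=> Ax Ay xy fL; exact: L_bilip_on_ge1 Ax Ay xy (L_bilip_on_bilip Ax Ay xy fL).
Qed.

Lemma L_bilip_on_comp L M h G :
  0 <= L -> 0 <= M -> L_bilip_on L setT h -> L_bilip_on M setT G ->
  L_bilip_on (M * L) setT (G \o h).
Proof.
move=> L0 M0 [_ hL] [_ GM]; apply: L_bilip_on_bounds => x y _ _ /=.
have [hyx yhx] := hL x y I I; have [Gyx yGx] := GM (h x) (h y) I I.
split.
  by apply: le_trans Gyx _; rewrite -mulrA ler_wpM2l.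
by apply: le_trans yhx _; rewrite [M * L]mulrC -mulrA ler_wpM2l.
Qed.

Lemma L_bilip_on_conj_scale L (s : R) G : 0 < s ->
  L_bilip_on L setT G -> L_bilip_on L setT (fun x => s *: G (s^-1 *: x)).
Proof.
move=> s0 [_ GL]; apply: L_bilip_on_bounds => x y _ _.
have [Gyx yGx] := GL (s^-1 *: x) (s^-1 *: y) I I.
rewrite -!scalerBr !enormZ gtr0_norm ?invr_gt0 // in Gyx yGx.
rewrite -!scalerBr !enormZ gtr0_norm //.
rewrite mulrCA ler_pdivlMl // in Gyx; rewrite ler_pdivrMl // in yGx.
by rewrite mulrCA.
Qed.

Lemma L_bilip_on_add_contraction g :
  (forall x y, enorm (g y - g x) <= enorm (y - x) / 4) ->
  L_bilip_on (4 / 3) setT (fun x => x + g x).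
Proof.
move=> g_contr; apply: L_bilip_on_bounds => x y _ _.
have -> : y + g y - (x + g x) = (y - x) + (g y - g x) by rewrite opprD addrACA.
have := g_contr x y; have := ler_enormD (y - x) (g y - g x).
have := ler_enormB (y - x + (g y - g x)) (g y - g x); rewrite addrK.
have := enorm_ge0 (y - x); lra.
Qed.

End Bilipschitz.

Section DimensionZero.
Variable R : realType.
Implicit Types (A : set 'rV[R]_0) (f : 'rV[R]_0 -> 'rV[R]_0).

Lemma rV0_eq (x y : 'rV[R]_0) : x = y.
Proof. by apply/rowP => -[]. Qed.

Lemma L_bilip_on_dim0 L A f : L_bilip_on L A f.
Proof.
apply: L_bilip_on_bounds => x y _ _.
by rewrite (rV0_eq x y) !subrr enorm0 mulr0.
Qed.

Lemma bilip_on_dim0 A f : bilip_on A f = 0.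
Proof.
have sup_no_pairs (g : 'rV[R]_0 -> 'rV[R]_0 -> R) :
    sup [set q | exists x y, [/\ A x, A y, x != y & q = g x y]] = 0.
  rewrite -sup0; congr sup; apply/seteqP; split=> // q [x [y [_ _ xy _]]].
  by rewrite (rV0_eq x y) eqxx in xy.
by rewrite /bilip_on /Lip_on /Lipinv_on !sup_no_pairs maxxx.
Qed.

End DimensionZero.

Section Lattice.
Variables (R : realType) (d : nat).
Implicit Types (x y a : 'rV[R]_d) (s t : R).

Definition lattice_floor s x : 'rV[R]_d := \row_i (Num.floor (x ord0 i / s))%:~R.

Lemma lattice_floor_Zd s x : Zd (lattice_floor s x).
Proof. by move=> i; rewrite mxE intr_int. Qed.

Lemma enorm_sub_lattice_floor s x :
  0 < s -> enorm (x - s *: lattice_floor s x) <= d%:R * s.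
Proof.
move=> s0; apply: enorm_le_coords => [|i]; first exact: ltW.
rewrite !mxE; set t := x ord0 i / s.
have /andP[fl_le lt_fl] := floor_itv t; rewrite intrD mulr1z in lt_fl.
have -> : x ord0 i = s * t by rewrite /t mulrC divfK ?gt_eqF.
rewrite -mulrBr normrM gtr0_norm // ger0_norm ?subr_ge0 //.
by rewrite -{2}(mulr1 s) ler_pM2l //; lra.
Qed.

Lemma Zd_separated : separated 1 (@Zd R d).
Proof.
move=> a b Za Zb ab.
have [i abi] : exists i, a ord0 i != b ord0 i.
  apply: contrapT => no_i; move/negP: ab; apply; apply/eqP/rowP => i.
  by apply/eqP/negPn/negP => abi; apply: no_i; exists i.
apply: le_trans (coord_le_enorm _ i).
by rewrite !mxE norm_intr_ge1 ?subr_eq0 //; apply: rpredB; [exact: Za | exact: Zb].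
Qed.

Lemma Zd_net : is_net (d%:R + 1) (@Zd R d).
Proof.
move=> x; exists (lattice_floor 1 x); first exact: lattice_floor_Zd.
have := enorm_sub_lattice_floor x ltr01; rewrite scale1r mulr1 => /le_trans; apply.
by rewrite lerDl.
Qed.

Lemma Zd_separated_net : separated_net (@Zd R d).
Proof.
exists 1, (d%:R + 1); split; [exact: ltr01 | | exact: Zd_separated | exact: Zd_net].
by rewrite ltr_pwDr ?ler0n.
Qed.

Lemma exists_at_dist a t : (0 < d)%N -> 0 <= t -> exists y, enorm (y - a) = t.
Proof.
move=> d_gt0 t0; exists (a + t *: delta_mx ord0 (Ordinal d_gt0)).
rewrite addrAC subrr add0r enormZ ger0_norm // /enorm (bigD1 (Ordinal d_gt0)) //=.
rewrite big1 ?addr0 ?mxE ?eqxx ?expr1n ?sqrtr1 ?mulr1 // => j j_neq.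
by rewrite mxE (negbTE j_neq) andbF expr0n.
Qed.

Lemma exists_neq : (0 < d)%N -> exists x y : 'rV[R]_d, x != y.
Proof.
move=> d_gt0; have [y y1] := exists_at_dist 0 d_gt0 ler01.
by exists 0, y; apply/eqP => y0; move: y1; rewrite -y0 subrr enorm0; lra.
Qed.

Lemma net_two_points (A : set 'rV[R]_d) Rn :
  (0 < d)%N -> is_net Rn A -> exists x y, [/\ A x, A y & x != y].
Proof.
move=> d_gt0 netA; have [a Aa aRn] := netA 0.
have Rn_ge0 : 0 <= Rn by apply: le_trans aRn; exact: enorm_ge0.
have [y ya] := exists_at_dist a d_gt0 (addr_ge0 Rn_ge0 ler01).
have [b Ab yb] := netA y; exists a, b; split=> //.
by apply/eqP => ab; move: yb; rewrite -ab ya; lra.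
Qed.

Lemma net_radius_ge (A : set 'rV[R]_d) r Rn :
  (0 < d)%N -> 0 < r -> separated r A -> is_net Rn A -> r / 2 <= Rn.
Proof.
move=> d_gt0 r0 sepA netA; have [a Aa _] := netA 0.
have r2_ge0 : 0 <= r / 2 by lra.
have [y ya] := exists_at_dist a d_gt0 r2_ge0.
have [b Ab yb] := netA y; rewrite leNgt; apply/negP => Rn_lt.
have ab : a != b by apply/eqP => ab; move: yb; rewrite -ab ya; lra.
have := sepA _ _ Aa Ab ab; have := ler_enorm_distD y a b.
rewrite (enorm_distC a y) ya; lra.
Qed.

End Lattice.

Lemma ler_dist_max0 (R : realDomainType) (u v : R) :
  `|Num.max 0 v - Num.max 0 u| <= `|v - u|.
Proof.
have := ler_norm (v - u); have := ler_norm (u - v); rewrite distrC => *.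
rewrite ler_norml !maxEle.
by case: (leP 0 u); case: (leP 0 v) => *; apply/andP; split; lra.
Qed.

Section Snap.
Variables (R : realType) (d : nat) (A : set 'rV[R]_d) (r : R) (a0 : 'rV[R]_d).
Variable p : 'rV[R]_d -> 'rV[R]_d.
Hypotheses (r_gt0 : 0 < r) (sepA : separated r A) (Aa0 : A a0).
Hypothesis p_near : forall a, A a -> enorm (p a - a) <= r / 8.
Implicit Types (x y a : 'rV[R]_d).

Definition anchor x := xget a0 (fun a => A a /\ enorm (x - a) < r / 2).

Definition tent x := Num.max 0 (r / 2 - enorm (x - anchor x)).

Definition snap_shift x := (tent x * (2 / r)) *: (p (anchor x) - anchor x).

Definition snap x := x + snap_shift x.

Lemma anchor_in x : A (anchor x).
Proof.
have [[a [Aa xa]]|no_a] := pselect (exists a, A a /\ enorm (x - a) < r / 2).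
  by have [] := @xgetI _ a0 (fun b => A b /\ enorm (x - b) < r / 2) a (conj Aa xa).
by rewrite /anchor xgetPN // => a [Aa xa]; apply: no_a; exists a.
Qed.

Lemma anchor_near x a : A a -> enorm (x - a) < r / 2 -> anchor x = a.
Proof.
move=> Aa xa; have [Ac xc] : A (anchor x) /\ enorm (x - anchor x) < r / 2.
  exact: (@xgetI _ a0 (fun b => A b /\ enorm (x - b) < r / 2) a (conj Aa xa)).
apply/eqP; apply: contraT => ca; have := sepA Ac Aa ca.
have := ler_enorm_distD x (anchor x) a; rewrite (enorm_distC (anchor x) x); lra.
Qed.

Lemma anchor_id a : A a -> anchor a = a.
Proof.
by move=> Aa; apply: anchor_near; rewrite // subrr enorm0 divr_gt0.
Qed.

Lemma tent_ge0 x : 0 <= tent x.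
Proof. by rewrite /tent le_max lexx. Qed.

Lemma tent_same x y : anchor x = anchor y -> `|tent y - tent x| <= enorm (y - x).
Proof.
rewrite /tent => ->; set c := anchor y.
apply: le_trans (ler_dist_max0 _ _) _; rewrite ler_norml.
have := ler_enorm_distD x y c; have := ler_enorm_distD y x c.
by rewrite (enorm_distC x y) => *; apply/andP; split; lra.
Qed.

(* The tents around distinct anchors have disjoint supports, as anchors are
   r-separated and tents have radius r / 2. *)
Lemma tent_disjoint x y :
  anchor x != anchor y -> tent x + tent y <= enorm (y - x).
Proof.
move=> cxy.
have far c z : A c -> c != anchor z -> r / 2 <= enorm (z - c).
  move=> Ac cz; rewrite leNgt; move: cz; apply: contra.
  by move=> /(anchor_near Ac) ->; rewrite eqxx.
have cyx : anchor y != anchor x by rewrite eq_sym.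
have := far _ _ (anchor_in x) cxy; have := far _ _ (anchor_in y) cyx.
have := sepA (anchor_in x) (anchor_in y) cxy.
have := ler_enorm_distD x (anchor x) (anchor y); have := ler_enorm_distD y x (anchor y).
have := ler_enorm_distD x y (anchor x); have := enorm_ge0 (y - x).
rewrite (enorm_distC (anchor x) x) (enorm_distC x y) /tent !maxEle.
move: (anchor x) (anchor y) => cx cy *.
by case: (leP 0 (r / 2 - enorm (x - cx))); case: (leP 0 (r / 2 - enorm (y - cy))) => *;
  lra.
Qed.

Lemma snap_shift_contraction x y :
  enorm (snap_shift y - snap_shift x) <= enorm (y - x) / 4.
Proof.
set v := fun z => (2 / r) *: (p (anchor z) - anchor z).
have shiftE z : snap_shift z = tent z *: v z by rewrite /snap_shift scalerA.
have v_le z : enorm (v z) <= 1 / 4.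
  rewrite enormZ ger0_norm; last by rewrite divr_ge0 // ltW.
  rewrite mulrAC ler_pdivrMr //.
  by have := p_near (anchor_in z); have := r_gt0; lra.
have [same | diff] := eqVneq (anchor x) (anchor y).
  rewrite !shiftE; have -> : v x = v y by rewrite /v same.
  rewrite -scalerBl enormZ mulrC.
  apply: le_trans (ler_pM (enorm_ge0 _) (normr_ge0 _) (v_le y) (tent_same same)) _.
  by rewrite mul1r mulrC.
have shift_le z : enorm (snap_shift z) <= tent z * (1 / 4).
  by rewrite shiftE enormZ ger0_norm ?tent_ge0 // ler_wpM2l ?tent_ge0.
apply: le_trans (ler_enormB _ _) _; apply: le_trans (lerD (shift_le y) (shift_le x)) _.
by move: (tent_disjoint diff); move: (tent x) (tent y) => tx ty; lra.
Qed.

Lemma snap_bilip : L_bilip_on (4 / 3) setT snap.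
Proof. exact: L_bilip_on_add_contraction snap_shift_contraction. Qed.

Lemma snap_id a : A a -> snap a = p a.
Proof.
move=> Aa; rewrite /snap /snap_shift /tent anchor_id // subrr enorm0 subr0.
rewrite max_r; last by rewrite divr_ge0 // ltW.
have -> : r / 2 * (2 / r) = 1 by rewrite mulrC mulrA divfK ?gt_eqF // divff // pnatr_eq0.
by rewrite scale1r addrC subrK.
Qed.

End Snap.

(* X and Q are the distances between two lattice points and between the points
   of A they are pulled to, P and Y those between their images. *)
Lemma coarse_comparison (R : realFieldType) (n L r Rn X Y P Q E : R) :
  1 <= n -> 1 <= L -> 0 < r -> 0 <= Rn -> r <= 8 * n * X -> r <= Q ->
  P <= L * Q -> Q <= L * P -> `|Y - P| <= E -> 2 * L * E <= r ->
  `|X - Q| <= 2 * Rn + r / 2 ->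
  Y <= 32 * L * n * ((Rn + r) / r) * X /\ X <= 32 * L * n * ((Rn + r) / r) * Y.
Proof.
move=> n_ge1 L_ge1 r_gt0 Rn_ge0 rX rQ PQ QP /ler_normlP[YP PY] LE /ler_normlP[XQ QX].
set w := (Rn + r) / r.
have wr : w * r = Rn + r by rewrite divfK ?gt_eqF.
have w_ge1 : 1 <= w by rewrite ler_pdivlMr // mul1r lerDr.
have E_le : E <= r / 2 by nra.
have X_ge0 : 0 <= X by nra.
have LX : 0 <= L * X by rewrite mulr_ge0 //; lra.
split.
- have LQ : L * Q <= L * (X + 2 * Rn + r / 2) by rewrite ler_wpM2l //; lra.
  have err : L * (2 * Rn + r / 2) + r / 2 <= 2 * (L * (w * r)) by rewrite wr; nra.
  have wr_le : L * (w * r) <= L * (w * (8 * n * X)).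
    by rewrite ler_wpM2l ?ler_wpM2l //; lra.
  have nw : 1 <= n * w by nra.
  have LX_le : L * X <= L * (n * w * X).
    by apply: ler_wpM2l; [lra | nra].
  lra.
- have Q_le : Q <= 2 * L * Y by nra.
  have wrQ : w * r <= w * Q by rewrite ler_wpM2l //; lra.
  have err : 2 * Rn + r / 2 <= 2 * (w * Q) by lra.
  have wQ : w * Q <= w * (2 * L * Y) by rewrite ler_wpM2l //; lra.
  nra.
Qed.

Section LatticeModel.
Variables (R : realType) (d : nat) (A : set 'rV[R]_d) (r Rn L : R).
Variable f : 'rV[R]_d -> 'rV[R]_d.
Hypotheses (d_gt0 : (0 < d)%N) (r_gt0 : 0 < r) (Rn_gt0 : 0 < Rn).
Hypotheses (sepA : separated r A) (netA : is_net Rn A) (fL : L_bilip_on L A f).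
Implicit Types (x y z a b : 'rV[R]_d).

Let L_ge1 : 1 <= L.
Proof.
have [x [y [Ax Ay xy]]] := net_two_points d_gt0 netA.
exact: L_bilip_on_ge1 Ax Ay xy fL.
Qed.

Definition mesh := r / (8 * d%:R).

Definition round a := mesh *: lattice_floor mesh a.

Definition near_point x := xget 0 (fun a => A a /\ enorm (x - a) <= Rn).

(* A point of A rounding to x if there is one (it is unique), and otherwise a
   point of A within Rn of x. *)
Definition pull x := xget (near_point x) (fun a => A a /\ round a = x).

Definition slope := r / (4 * L * (Rn + r)).

Definition coarse_map x := f (pull x) + slope *: (x - round (pull x)).

Definition lattice_map z := mesh^-1 *: coarse_map (mesh *: z).

Lemma mesh_gt0 : 0 < mesh.
Proof. by rewrite divr_gt0 // mulr_gt0 // ltr0n. Qed.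

Lemma round_near a : enorm (a - round a) <= r / 8.
Proof.
have -> : r / 8 = d%:R * mesh by rewrite /mesh; field; rewrite pnatr_eq0 -lt0n.
exact: enorm_sub_lattice_floor a mesh_gt0.
Qed.

Lemma round_inj a b : A a -> A b -> round a = round b -> a = b.
Proof.
move=> Aa Ab rab; apply/eqP; apply: contraT => ab.
have := sepA Aa Ab ab; have := round_near a; have := round_near b.
have := ler_enorm_distD (round a) a b; rewrite rab (enorm_distC (round b) b).
have := r_gt0; lra.
Qed.

Lemma near_point_in x : A (near_point x) /\ enorm (x - near_point x) <= Rn.
Proof.
have [a Aa xa] := netA x.
exact: (@xgetI _ 0 (fun a => A a /\ enorm (x - a) <= Rn) a (conj Aa xa)).
Qed.

Lemma pull_in x : A (pull x) /\ enorm (x - round (pull x)) <= Rn + r / 8.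
Proof.
have [[a [Aa ax]] | no_a] := pselect (exists a, A a /\ round a = x).
  have [Ap px] := @xgetI _ (near_point x) (fun a => A a /\ round a = x) a (conj Aa ax).
  split=> //; rewrite px subrr enorm0; have := r_gt0; have := Rn_gt0; lra.
rewrite /pull xgetPN => [|a [Aa ax]]; last by apply: no_a; exists a.
have [Ap xp] := near_point_in x; split=> //.
apply: le_trans (ler_enorm_distD (near_point x) _ _) _.
by apply: lerD => //; exact: round_near.
Qed.

Lemma pull_round a : A a -> pull (round a) = a.
Proof.
move=> Aa; have [Ap pa] := @xgetI _ (near_point (round a))
  (fun b => A b /\ round b = round a) a (conj Aa erefl).
exact: round_inj pa.
Qed.

Definition lattice_const := 32 * L * d%:R * ((Rn + r) / r).

Lemma slope_gt0 : 0 < slope.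
Proof. by rewrite divr_gt0 // !mulr_gt0 ?addr_gt0 //; have := L_ge1; lra. Qed.

Lemma slope_mul : slope * (4 * L * (Rn + r)) = r.
Proof. by rewrite divfK // gt_eqF // !mulr_gt0 ?addr_gt0 //; have := L_ge1; lra. Qed.

Lemma lattice_const_slope : lattice_const * slope = 8 * d%:R.
Proof.
rewrite /lattice_const /slope; field.
by rewrite !gt_eqF ?addr_gt0 //; have := L_ge1; lra.
Qed.

Lemma coarse_map_same x y :
  pull x = pull y -> coarse_map y - coarse_map x = slope *: (y - x).
Proof. by rewrite /coarse_map => ->; apply/rowP => i; rewrite !mxE; ring. Qed.

Lemma coarse_map_far x y : pull x != pull y -> mesh <= enorm (y - x) ->
  enorm (coarse_map y - coarse_map x) <= lattice_const * enorm (y - x) /\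
  enorm (y - x) <= lattice_const * enorm (coarse_map y - coarse_map x).
Proof.
move=> ab mesh_le; rewrite /coarse_map /lattice_const.
have [Aa xa] := pull_in x; have [Ab yb] := pull_in y.
move: (pull x) (pull y) ab Aa Ab xa yb => a b ab Aa Ab xa yb.
have ba : b != a by rewrite eq_sym.
have [fba bfa] := proj2 fL a b Aa Ab.
have ra := round_near a; have rb := round_near b.
set Y := enorm (f b + _ - _).
apply: (@coarse_comparison _ d%:R L r Rn (enorm (y - x)) Y (enorm (f b - f a))
  (enorm (b - a)) (slope * (enorm (x - round a) + enorm (y - round b)))) => //.
- by rewrite ler1n.
- exact: ltW.
- by rewrite /mesh ler_pdivrMr ?mulr_gt0 ?ltr0n // mulrC in mesh_le.
- exact: sepA Ab Aa ba.
- apply: le_trans (ler_enorm_dist _ _) _.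
  have -> : f b + slope *: (y - round b) - (f a + slope *: (x - round a)) - (f b - f a) =
      slope *: ((y - round b) - (x - round a)).
    by apply/rowP => i; rewrite !mxE; ring.
  rewrite enormZ gtr0_norm ?slope_gt0 //; apply: ler_wpM2l; first exact: ltW slope_gt0.
  by apply: le_trans (ler_enormB _ _) _; rewrite addrC.
- rewrite mulrA -slope_mul.
  have -> : slope * (4 * L * (Rn + r)) = 2 * L * slope * (2 * (Rn + r)) by ring.
  apply: ler_wpM2l.
    by rewrite mulr_ge0 ?(ltW slope_gt0) // mulr_ge0 //; have := L_ge1; lra.
  by have := r_gt0; lra.
- apply: le_trans (ler_enorm_dist _ _) _.
  have -> : y - x - (b - a) = (y - round b) + (round b - b) - ((x - round a) + (round a - a)).
    by apply/rowP => i; rewrite !mxE; ring.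
  apply: le_trans (ler_enormB _ _) _.
  have := ler_enormD (y - round b) (round b - b).
  have := ler_enormD (x - round a) (round a - a).
  by rewrite (enorm_distC (round a)) (enorm_distC (round b)); lra.
Qed.

Lemma coarse_map_bounds x y : mesh <= enorm (y - x) ->
  enorm (coarse_map y - coarse_map x) <= lattice_const * enorm (y - x) /\
  enorm (y - x) <= lattice_const * enorm (coarse_map y - coarse_map x).
Proof.
move=> mesh_le; have [same | far] := eqVneq (pull x) (pull y); last exact: coarse_map_far.
rewrite coarse_map_same // enormZ gtr0_norm ?slope_gt0 //.
have const_slope := lattice_const_slope; have d_ge1 : 1 <= d%:R :> R by rewrite ler1n.
have D_ge : r <= 4 * L * (Rn + r) by have := L_ge1; have := r_gt0; have := Rn_gt0; nra.
have slope_le1 : slope <= 1.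
  by rewrite -(ler_pM2r (lt_le_trans r_gt0 D_ge)) mul1r slope_mul.
have slope_le : slope <= lattice_const by have := slope_gt0; nra.
split; first by apply: ler_wpM2r => //; exact: enorm_ge0.
rewrite mulrA const_slope -{1}(mul1r (enorm _)); apply: ler_wpM2r; first exact: enorm_ge0.
lra.
Qed.

Lemma lattice_map_bilip : L_bilip_on lattice_const (@Zd R d) lattice_map.
Proof.
apply: L_bilip_on_bounds => z w Zz Zw.
have [->|zw] := eqVneq z w; first by rewrite !subrr enorm0 mulr0.
have mesh_dist : enorm (mesh *: w - mesh *: z) = mesh * enorm (w - z).
  by rewrite -scalerBr enormZ gtr0_norm ?mesh_gt0.
have [] := @coarse_map_bounds (mesh *: z) (mesh *: w).
  rewrite mesh_dist ler_pMr ?mesh_gt0 //; apply: Zd_separated => //.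
  by rewrite eq_sym.
rewrite mesh_dist /lattice_map -scalerBr enormZ gtr0_norm ?invr_gt0 ?mesh_gt0 //.
move=> upper lower; split.
  by rewrite ler_pdivrMl ?mesh_gt0 // mulrCA.
by rewrite mulrCA ler_pdivlMl ?mesh_gt0.
Qed.

Lemma lattice_map_round a : A a -> lattice_map (lattice_floor mesh a) = mesh^-1 *: f a.
Proof.
move=> Aa; rewrite /lattice_map -[mesh *: _]/(round a) /coarse_map pull_round //.
by rewrite subrr scaler0 addr0.
Qed.

Lemma lattice_reduction : exists g, L_bilip_on lattice_const (@Zd R d) g /\
  forall G M, L_bilip_on M setT G -> extends (@Zd R d) G g ->
  exists F, L_bilip_on (M * (4 / 3)) setT F /\ extends A F f.
Proof.
exists lattice_map; split=> [|G M GM extG]; first exact: lattice_map_bilip.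
have [a0 Aa0 _] := netA 0.
have round_near' a : A a -> enorm (round a - a) <= r / 8.
  by rewrite enorm_distC round_near.
have [x [y xy]] := exists_neq R d_gt0.
have M_ge0 : 0 <= M by have := L_bilip_on_ge1 I I xy GM; lra.
exists ((fun x => mesh *: G (mesh^-1 *: x)) \o snap A r a0 round); split.
  apply: L_bilip_on_comp => //; first lra.
    exact: snap_bilip r_gt0 sepA Aa0 round_near'.
  exact: L_bilip_on_conj_scale mesh_gt0 GM.
move=> a Aa /=; rewrite snap_id // scalerA mulVf ?gt_eqF ?mesh_gt0 // scale1r.
rewrite (extG _ (lattice_floor_Zd _ _)) lattice_map_round //.
by rewrite scalerA divff ?gt_eqF ?mesh_gt0 // scale1r.
Qed.

End LatticeModel.

Lemma lattice_reduction_bilip (R : realType) (d : nat) (A : set 'rV[R]_d) (r Rn : R)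
    (f : 'rV[R]_d -> 'rV[R]_d) :
  (0 < d)%N -> 0 < r -> 0 < Rn -> separated r A -> is_net Rn A -> bilip_map_on A f ->
  exists g, [/\ bilip_map_on (@Zd R d) g, 1 <= bilip_on (@Zd R d) g,
    bilip_on (@Zd R d) g <= lattice_const d r Rn (bilip_on A f) &
    forall G, bilip_map_on setT G -> extends (@Zd R d) G g ->
      exists F, [/\ bilip_map_on setT F, extends A F f &
        bilip_on setT F <= bilip_on setT G * (4 / 3)]].
Proof.
move=> d_gt0 r_gt0 Rn_gt0 sepA netA [L fL].
have [x [y [Ax Ay xy]]] := net_two_points d_gt0 netA.
have [g [gB extg]] :=
  lattice_reduction d_gt0 r_gt0 Rn_gt0 sepA netA (L_bilip_on_bilip Ax Ay xy fL).
have [z [w [Zz Zw zw]]] := net_two_points d_gt0 (@Zd_net R d).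
exists g; split=> [||| G [M GM] extG]; first by exists (lattice_const d r Rn (bilip_on A f)).
- exact: bilip_on_ge1 Zz Zw zw gB.
- by apply: (bilip_on_le _ gB); have := L_bilip_on_ge1 Zz Zw zw gB; lra.
have [u [v uv]] := exists_neq R d_gt0.
have [F [FB extF]] := extg G _ (L_bilip_on_bilip I I uv GM) extG.
exists F; split=> //; first by exists (bilip_on setT G * (4 / 3)).
by apply: bilip_on_le FB; have := bilip_on_ge1 I I uv GM; lra.
Qed.

Lemma lattice_const_le (R : realType) (d : nat) (r Rn L : R) :
  (0 < d)%N -> 0 < r -> r / 2 <= Rn -> 0 <= L ->
  lattice_const d r Rn L <=
    24 * Num.sqrt d%:R * Rn ^+ 2 * (16 * Num.max (3 * d%:R / r) 1) ^+ 3 * L.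
Proof.
move=> d_gt0 r_gt0 Rn_ge L_ge0; rewrite /lattice_const.
set K := 16 * _; set D : R := d%:R; set q := Rn / r.
have D_ge1 : 1 <= D by rewrite ler1n.
have K_ge16 : 16 <= K by rewrite -{1}(mulr1 16) ler_pM2l // le_max lexx orbT.
have Kr : 48 * D <= K * r.
  have -> : 48 * D = 16 * (3 * D / r) * r by field; rewrite gt_eqF.
  by rewrite ler_pM2r // ler_pM2l // le_max lexx.
have sqrt_ge1 : 1 <= Num.sqrt D by rewrite -sqrtr1 ler_sqrt ?ler0n.
have Rn_q : Rn = q * r by rewrite /q divfK ?gt_eqF.
have q_ge : 1 / 2 <= q by rewrite /q ler_pdivlMr //; lra.
have -> : (Rn + r) / r = q + 1 by rewrite /q mulrDl divff ?gt_eqF.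
have KRn : 48 * D * q <= K * Rn.
  have : q * (48 * D) <= q * (K * r) by rewrite ler_wpM2l //; lra.
  by rewrite Rn_q; lra.
have K3 : 16 * (48 * D * q) ^+ 2 <= Rn ^+ 2 * K ^+ 3.
  have -> : Rn ^+ 2 * K ^+ 3 = K * (K * Rn) ^+ 2 by ring.
  apply: ler_pM => //; rewrite ?sqr_ge0 // lerXn2r ?nnegrE //; nra.
have small : 32 * D * (q + 1) <= 16 * (48 * D * q) ^+ 2.
  have : q + 1 <= 6 * (q * q) by nra.
  have : D <= D * D by nra.
  nra.
have P_ge0 : 0 <= Rn ^+ 2 * K ^+ 3 by rewrite mulr_ge0 ?sqr_ge0 ?exprn_ge0 //; lra.
have : L * (32 * D * (q + 1)) <= L * (Rn ^+ 2 * K ^+ 3).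
  by rewrite ler_wpM2l // (le_trans small K3).
have : L * (Rn ^+ 2 * K ^+ 3) <= 24 * Num.sqrt D * L * (Rn ^+ 2 * K ^+ 3).
  by rewrite ler_wpM2r //; nra.
lra.
Qed.

Definition extension_property (R : realType) (d : nat) (A : set 'rV[R]_d) :=
  forall f : 'rV[R]_d -> 'rV[R]_d, bilip_map_on A f ->
    exists F : 'rV[R]_d -> 'rV[R]_d, bilip_map_on setT F /\ extends A F f.

Lemma extension_property_nets (R : realType) (d : nat) :
  extension_property (@Zd R d) ->
  forall A : set 'rV[R]_d, separated_net A -> extension_property A.
Proof.
move=> extZ A [r [Rn [r_gt0 Rn_gt0 sepA netA]]] f [L fL].
have [d0 | d_gt0] := posnP d.
  by subst d; exists f; split=> //; exists 0; exact: L_bilip_on_dim0.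
have [g [gL extg]] := lattice_reduction d_gt0 r_gt0 Rn_gt0 sepA netA fL.
have [G [[M GM] extG]] := extZ g (ex_intro (fun M => L_bilip_on M _ g) _ gL).
have [F [FM extF]] := extg G M GM extG.
by exists F; split=> //; exists (M * (4 / 3)).
Qed.

Theorem theorem1p1 (R : realType) (d : nat) :
  ( (* (i) <-> (ii) *)
    (forall f : 'rV[R]_d -> 'rV[R]_d, bilip_map_on (@Zd R d) f ->
       exists F : 'rV[R]_d -> 'rV[R]_d,
         bilip_map_on setT F /\ extends (@Zd R d) F f)
    <->
    (forall (A : set 'rV[R]_d), separated_net A ->
     forall f : 'rV[R]_d -> 'rV[R]_d, bilip_map_on A f ->
       exists F : 'rV[R]_d -> 'rV[R]_d,
         bilip_map_on setT F /\ extends A F f) )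
  /\
  (forall C : R -> R,
     (forall x, 1 <= x -> 1 <= C x) ->
     (forall x y, 1 <= x -> x <= y -> C x <= C y) ->
     (forall f : 'rV[R]_d -> 'rV[R]_d, bilip_map_on (@Zd R d) f ->
        exists F : 'rV[R]_d -> 'rV[R]_d,
          [/\ bilip_map_on setT F, extends (@Zd R d) F f &
              bilip_on setT F <= C (bilip_on (@Zd R d) f)]) ->
     forall (A : set 'rV[R]_d) (r Rn : R),
       0 < r -> 0 < Rn -> separated r A -> is_net Rn A ->
     forall f : 'rV[R]_d -> 'rV[R]_d, bilip_map_on A f ->
       let K := 16 * Num.max (3 * d%:R / r) 1 in
       exists F : 'rV[R]_d -> 'rV[R]_d,
         [/\ bilip_map_on setT F, extends A F f &
             bilip_on setT F <=
               K * C (24 * Num.sqrt d%:R * Rn ^+ 2 * K ^+ 3 * bilip_on A f)]).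
Proof.
split.
  split; first exact: extension_property_nets.
  by move=> extA f fB; apply: extA fB; exact: Zd_separated_net.
move=> C C_ge1 C_mono extC A r Rn r_gt0 Rn_gt0 sepA netA f fB K.
have K_ge16 : 16 <= K by rewrite -{1}(mulr1 16) ler_pM2l // le_max lexx orbT.
have [d0 | d_gt0] := posnP d.
  subst d; exists f; split=> //; first by exists 0; exact: L_bilip_on_dim0.
  have [F0 [_ _]] := extC f (ex_intro _ 0 (L_bilip_on_dim0 0 _ f)).
  rewrite !bilip_on_dim0 mulr0n sqrtr0 !(mulr0, mul0r) => C0_ge0.
  by rewrite mulr_ge0 //; lra.
have [g [gB g_ge1 g_le extg]] := lattice_reduction_bilip d_gt0 r_gt0 Rn_gt0 sepA netA fB.
have [G [GB extG GC]] := extC g gB.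
have [F [FB extF F_le]] := extg G GB extG.
exists F; split=> //; apply: le_trans F_le _.
set T := 24 * _ * _ * _ * _.
have g_T : bilip_on (@Zd R d) g <= T.
  apply: le_trans g_le (lattice_const_le d_gt0 r_gt0 _ (bilip_on_ge0 A f)).
  exact: net_radius_ge d_gt0 r_gt0 sepA netA.
have := C_mono _ _ g_ge1 g_T; have := C_ge1 _ (le_trans g_ge1 g_T).
by move: (C T) (C (bilip_on _ g)) (bilip_on setT G) GC => c c' b; nra.
Qed.
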